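(* Let $(R,\mathfrak m)$ be a noetherian local ring whose nilradical $I=\mathrm{Nil}(R)$ is its only associated prime ideal, and let $\mathfrak p$ be a prime ideal of $R$. Take $y_1,\ldots,y_r\in\mathfrak p$ and $x_1,\ldots,x_t\in\mathfrak m\setminus\mathfrak p$ whose images form a regular system of parameters of $(R_{\mathfrak p})_{\rm red}$ and of $R/\mathfrak p$, respectively. If $\mathfrak p/(\mathfrak p^2+I)$ is a free $R/\mathfrak p$-module with basis $y_1+(\mathfrak p^2+I),\ldots,y_r+(\mathfrak p^2+I)$, then $R_{\rm red}$ is regular.
   Context: $\mathrm{Nil}(A)$ denotes the nilradical of a ring $A$ and $A_{\rm red}=A/\mathrm{Nil}(A)$. (In the paper $\mathfrak p$ is the center $\{a\in R:\nu_1(a)>0\}$ of a valuation $\nu_1$; only that $\mathfrak p$ is a prime ideal of $R$ is used.) *)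

From HB Require Import structures.
From mathcomp Require Import all_boot all_order all_algebra.
Set Implicit Arguments. Unset Strict Implicit. Unset Printing Implicit Defensive.
Import GRing.Theory.
Local Open Scope ring_scope.

Section CommAlg.
Variable R : comNzRingType.

Definition is_ideal (I : R -> Prop) : Prop :=
  I 0 /\ (forall a b, I a -> I b -> I (a + b)) /\ (forall c a, I a -> I (c * a)).

Definition is_prime (P : R -> Prop) : Prop :=
  is_ideal P /\ ~ P 1 /\ (forall a b, P (a * b) -> P a \/ P b).

Definition gen_by (n : nat) (g : 'I_n -> R) : R -> Prop :=
  fun a => exists c : 'I_n -> R, a = \sum_(i < n) c i * g i.

Definition ideal_add (I J : R -> Prop) : R -> Prop :=
  fun a => exists u v, I u /\ J v /\ a = u + v.

Definition ideal_sq (I : R -> Prop) : R -> Prop :=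
  fun a => exists n (u v : 'I_n -> R),
    (forall i, I (u i) /\ I (v i)) /\ a = \sum_(i < n) u i * v i.

Definition nilrad : R -> Prop := fun a => exists n : nat, a ^+ n = 0.

Definition noetherian : Prop :=
  forall I, is_ideal I -> exists n (g : 'I_n -> R), forall a, I a <-> gen_by g a.

(* (R, m) is local: m is exactly the set of non-units (so m is the unique maximal ideal) *)
Definition local_with (m : R -> Prop) : Prop :=
  is_ideal m /\ forall a, m a <-> ~ (exists b, a * b = 1).

Definition associated (P : R -> Prop) : Prop :=
  is_prime P /\ exists x, forall a, P a <-> a * x = 0.

Definition prime_chain (P : nat -> R -> Prop) (n : nat) : Prop :=
  (forall i, (i <= n)%N -> is_prime (P i)) /\
  (forall i, (i < n)%N -> (forall a, P i a -> P i.+1 a) /\ exists a, P i.+1 a /\ ~ P i a).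

Definition krull_dim_eq (d : nat) : Prop :=
  (exists P, prime_chain P d) /\ (forall P n, prime_chain P n -> (n <= d)%N).

(* Krull dimension of R/p equals d (chains of primes containing p) *)
Definition quot_dim_eq (p : R -> Prop) (d : nat) : Prop :=
  (exists P, prime_chain P d /\ forall a, p a -> P 0%N a) /\
  (forall P n, prime_chain P n -> (forall a, p a -> P 0%N a) -> (n <= d)%N).

(* height of p equals d (= dim R_p = dim (R_p)_red) *)
Definition height_eq (p : R -> Prop) (d : nat) : Prop :=
  (exists P, prime_chain P d /\ forall a, P d a <-> p a) /\
  (forall P n, prime_chain P n -> (forall a, P n a -> p a) -> (n <= d)%N).

(* images of x_1..x_t form a regular system of parameters of R/p,
   where m is the maximal ideal of R: x_i in m and m/p = (x)(R/p), t = dim R/p *)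
Definition rsop_quot (m p : R -> Prop) (t : nat) (x : 'I_t -> R) : Prop :=
  (forall i, m (x i)) /\ (forall a, m a <-> ideal_add p (gen_by x) a) /\ quot_dim_eq p t.

(* images of y_1..y_r form a regular system of parameters of (R_p)_red:
   y_i in p, p R_p = (y) R_p + Nil(R_p), and r = dim (R_p)_red = ht p.
   (a/1 lies in (y)R_p + Nil(R_p) iff s a lies in (y) + Nil(R) for some s not in p.) *)
Definition rsop_loc_red (p : R -> Prop) (r : nat) (y : 'I_r -> R) : Prop :=
  (forall i, p (y i)) /\
  (forall a, p a -> exists s, ~ p s /\ ideal_add (gen_by y) nilrad (s * a)) /\
  height_eq p r.

(* p/(p^2 + I) is a free R/p-module with basis the classes of y_1..y_r *)
Definition free_conormal_basis (p : R -> Prop) (r : nat) (y : 'I_r -> R) : Prop :=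
  (forall a, p a -> exists c : 'I_r -> R,
       ideal_add (ideal_sq p) nilrad (a - \sum_(i < r) c i * y i)) /\
  (forall c : 'I_r -> R,
       ideal_add (ideal_sq p) nilrad (\sum_(i < r) c i * y i) -> forall i, p (c i)).

(* R_red (local with maximal ideal m/Nil, dim R_red = dim R) is regular:
   its maximal ideal is generated by dim R_red elements *)
Definition red_regular (m : R -> Prop) : Prop :=
  exists d (z : 'I_d -> R), krull_dim_eq d /\
    forall a, m a <-> ideal_add (gen_by z) nilrad a.

End CommAlg.

(* Put z = (y_1, ..., y_r, x_1, ..., x_t) and I = Nil(R).  Nakayama's lemma
   over R_p turns the spanning hypothesis on p/(p^2 + I) into p ⊆ (y) + I, so
   m = p + (x) ⊆ (z) + I: the maximal ideal of R_red has r + t generators.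
   Joining a chain of length r below p to one of length t above p gives
   dim R >= r + t.  Conversely, extend a chain of primes of length n to end at
   m; by Krull's principal ideal theorem it can be shortened by at most one for
   each y_i so that its bottom contains y_i.  The bottom of the resulting chain,
   of length >= n - r, then contains (y) + I ⊇ p, so n - r <= dim R/p = t. *)
From HB Require Import structures.
From mathcomp Require Import all_boot all_order all_algebra.
From mathcomp Require Import ring zify.
From Stdlib Require Import Classical ClassicalEpsilon.
Set Implicit Arguments. Unset Strict Implicit. Unset Printing Implicit Defensive.
Import GRing.Theory.
Local Open Scope ring_scope.

Section Ideals.
Variable R : comNzRingType.
Implicit Types (I J K P Q m : R -> Prop) (a b c s u v : R).

Definition lcomb (k : nat) (g : nat -> R) a :=
  exists c : nat -> R, a = \sum_(i < k) c i * g i.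

Definition ideal_mul I J a := exists s : seq (R * R),
  (forall pr, pr \in s -> I pr.1 /\ J pr.2) /\ a = \sum_(pr <- s) pr.1 * pr.2.

Fixpoint ideal_pow I k : R -> Prop :=
  if k is k'.+1 then ideal_mul I (ideal_pow I k') else fun _ => True.

Definition principal b a := exists c, a = c * b.

(* The contraction to R of the localisation J R_P. *)
Definition sat P J a := exists s, ~ P s /\ J (s * a).

Lemma ideal0 I : is_ideal I -> I 0.
Proof. by case. Qed.

Lemma idealD I a b : is_ideal I -> I a -> I b -> I (a + b).
Proof. by case=> _ []; auto. Qed.

Lemma idealM I c a : is_ideal I -> I a -> I (c * a).
Proof. by case=> _ []; auto. Qed.

Lemma idealMl I c a : is_ideal I -> I a -> I (a * c).
Proof. by move=> hI ha; rewrite mulrC; apply: idealM. Qed.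

Lemma idealN I a : is_ideal I -> I a -> I (- a).
Proof. by move=> hI ha; rewrite -mulN1r; apply: idealM. Qed.

Lemma idealB I a b : is_ideal I -> I a -> I b -> I (a - b).
Proof. by move=> hI ha hb; apply: idealD => //; apply: idealN. Qed.

Lemma idealBr I a b : is_ideal I -> I b -> I (a - b) -> I a.
Proof. by move=> hI hb hab; rewrite -(subrK b a); apply: idealD. Qed.

Lemma ideal_sum I (T : eqType) (r : seq T) (F : T -> R) :
  is_ideal I -> (forall i, i \in r -> I (F i)) -> I (\sum_(i <- r) F i).
Proof.
move=> hI hF; rewrite big_seq; apply: big_ind => //; first exact: ideal0.
by move=> a b; apply: idealD.
Qed.

Lemma is_ideal_add I J : is_ideal I -> is_ideal J -> is_ideal (ideal_add I J).
Proof.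
move=> hI hJ; split; first by exists 0, 0; rewrite addr0; do !split; apply: ideal0.
split.
  move=> _ _ [u [v [hu [hv ->]]]] [u' [v' [hu' [hv' ->]]]].
  by exists (u + u'), (v + v'); do !split; [apply: idealD|apply: idealD|rewrite addrACA].
move=> c _ [u [v [hu [hv ->]]]]; exists (c * u), (c * v).
by do !split; [apply: idealM|apply: idealM|rewrite mulrDr].
Qed.

Lemma ideal_addl I J a : is_ideal J -> I a -> ideal_add I J a.
Proof. by move=> hJ ha; exists a, 0; rewrite addr0; do !split => //; apply: ideal0. Qed.

Lemma ideal_addr I J a : is_ideal I -> J a -> ideal_add I J a.
Proof. by move=> hI ha; exists 0, a; rewrite add0r; do !split => //; apply: ideal0. Qed.

Lemma is_ideal_mul I J : is_ideal I -> is_ideal (ideal_mul I J).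
Proof.
move=> hI; split; first by exists [::]; rewrite big_nil.
split.
  move=> _ _ [s [hs ->]] [t [ht ->]]; exists (s ++ t); rewrite big_cat; split => //.
  by move=> pr; rewrite mem_cat => /orP [] ?; auto.
move=> c _ [s [hs ->]]; exists [seq (c * pr.1, pr.2) | pr <- s]; split.
  by move=> _ /mapP [q /hs [h1 h2] ->]; split => //; apply: idealM.
by rewrite big_map mulr_sumr; apply: eq_bigr => pr _ /=; rewrite mulrA.
Qed.

Lemma mem_ideal_mul I J u v : I u -> J v -> ideal_mul I J (u * v).
Proof.
move=> hu hv; exists [:: (u, v)]; rewrite big_seq1; split => //.
by move=> pr; rewrite inE => /eqP ->.
Qed.

Lemma ideal_mul_subl I J a : is_ideal I -> ideal_mul I J a -> I a.
Proof. by move=> hI [s [hs ->]]; apply: ideal_sum => // pr /hs [h _]; apply: idealMl. Qed.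

Lemma ideal_mul_subr I J a : is_ideal J -> ideal_mul I J a -> J a.
Proof. by move=> hJ [s [hs ->]]; apply: ideal_sum => // pr /hs [_ h]; apply: idealM. Qed.

Lemma ideal_mul_mono I J I' J' a : (forall b, I b -> I' b) -> (forall b, J b -> J' b) ->
  ideal_mul I J a -> ideal_mul I' J' a.
Proof. by move=> hI hJ [s [hs ->]]; exists s; split => // pr /hs []; auto. Qed.

Lemma ideal_sq_mul I a : ideal_sq I a -> ideal_mul I I a.
Proof.
case=> n [u [v [huv ->]]]; exists [seq (u i, v i) | i <- enum 'I_n]; split.
  by move=> _ /mapP [i _ ->]; apply: huv.
by rewrite big_map big_enum.
Qed.

Lemma is_ideal_pow I k : is_ideal I -> is_ideal (ideal_pow I k).
Proof. by move=> hI; case: k => [|k] //=; apply: is_ideal_mul. Qed.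

Lemma ideal_pow_sub I k k' a : is_ideal I -> (k <= k')%N ->
  ideal_pow I k' a -> ideal_pow I k a.
Proof.
move=> hI /subnKC <-; elim: (k' - k)%N a => [|d IH] a; first by rewrite addn0.
by rewrite addnS => /ideal_mul_subr h; apply/IH/h/is_ideal_pow.
Qed.

Lemma mem_ideal_pow I k a : I a -> ideal_pow I k (a ^+ k).
Proof. by move=> ha; elim: k => [|k IH] //=; rewrite exprS; apply: mem_ideal_mul. Qed.

Lemma ideal_pow_mono I J k a : (forall b, I b -> J b) ->
  ideal_pow I k a -> ideal_pow J k a.
Proof.
by move=> hIJ; elim: k a => [|k IH] a //=; apply: ideal_mul_mono => // b; apply: IH.
Qed.

Lemma is_ideal_lcomb k g : is_ideal (lcomb k g).
Proof.
split; first by exists (fun=> 0); rewrite big1 // => i _; rewrite mul0r.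
split.
  move=> _ _ [c ->] [d ->]; exists (fun i => c i + d i); rewrite -big_split /=.
  by apply: eq_bigr => i _; rewrite mulrDl.
move=> e _ [c ->]; exists (fun i => e * c i); rewrite mulr_sumr.
by apply: eq_bigr => i _; rewrite mulrA.
Qed.

Lemma lcomb_gen k g j : (j < k)%N -> lcomb k g (g j).
Proof.
move=> hj; exists (fun i => (i == j)%:R).
rewrite (bigD1 (Ordinal hj)) //= eqxx mul1r big1 ?addr0 // => i /negbTE hi.
by rewrite -val_eqE /= in hi; rewrite hi mul0r.
Qed.

Lemma lcomb_sub I k g a : is_ideal I -> (forall j, (j < k)%N -> I (g j)) ->
  lcomb k g a -> I a.
Proof.
by move=> hI hg [c ->]; apply: ideal_sum => // i _; apply: idealM => //; apply: hg.
Qed.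

Lemma lcomb_recr k g a : lcomb k.+1 g a -> exists w c, lcomb k g w /\ a = w + c * g k.
Proof.
case=> c ->; rewrite big_ord_recr /=.
by exists (\sum_(i < k) c i * g i), (c k); split => //; exists c.
Qed.

Lemma ideal_mul_lcomb I J k g v : is_ideal I -> (forall a, J a -> lcomb k g a) ->
  ideal_mul I J v -> exists c : nat -> R, (forall l, I (c l)) /\ v = \sum_(l < k) c l * g l.
Proof.
move=> hI hJ [s [hs ->]]; elim: s hs => [|pr s IH] hs.
  exists (fun=> 0); split=> [_|]; first exact: ideal0 hI.
  by rewrite big_nil big1 // => i _; rewrite mul0r.
rewrite big_cons; have [/= h1 /hJ [d hd]] := hs pr (mem_head _ _).
have [c [hc ->]] : exists c : nat -> R, (forall l, I (c l)) /\
    \sum_(pr <- s) pr.1 * pr.2 = \sum_(l < k) c l * g l.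
  by apply: IH => q hq; apply: hs; rewrite inE hq orbT.
exists (fun l => pr.1 * d l + c l); split=> [l|]; first by apply: idealD => //; apply: idealMl.
rewrite hd mulr_sumr -big_split /=; apply: eq_bigr => i _.
by rewrite mulrDl mulrA.
Qed.

Lemma is_ideal_principal b : is_ideal (principal b).
Proof.
split; first by exists 0; rewrite mul0r.
split; first by move=> _ _ [c ->] [d ->]; exists (c + d); rewrite mulrDl.
by move=> e _ [c ->]; exists (e * c); rewrite mulrA.
Qed.

Lemma is_ideal_gen_by n (g : 'I_n -> R) : is_ideal (gen_by g).
Proof.
split; first by exists (fun=> 0); rewrite big1 // => i _; rewrite mul0r.
split.
  move=> _ _ [c ->] [d ->]; exists (fun i => c i + d i); rewrite -big_split /=.
  by apply: eq_bigr => i _; rewrite mulrDl.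
move=> e _ [c ->]; exists (fun i => e * c i); rewrite mulr_sumr.
by apply: eq_bigr => i _; rewrite mulrA.
Qed.

Lemma gen_by_sub I n (g : 'I_n -> R) a : is_ideal I -> (forall i, I (g i)) ->
  gen_by g a -> I a.
Proof. by move=> hI hg [c ->]; apply: ideal_sum => // i _; apply: idealM. Qed.

Definition fam_cat n1 n2 (g : 'I_n1 -> R) (h : 'I_n2 -> R) (i : 'I_(n1 + n2)) : R :=
  match split i with inl j => g j | inr j => h j end.

Lemma gen_by_cat n1 n2 (g : 'I_n1 -> R) (h : 'I_n2 -> R) u v :
  gen_by g u -> gen_by h v -> gen_by (fam_cat g h) (u + v).
Proof.
move=> [c ->] [d ->]; exists (fam_cat c d).
rewrite big_split_ord /fam_cat; congr (_ + _); apply: eq_bigr => i _.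
  by rewrite (unsplitK (inl _ i)).
by rewrite (unsplitK (inr _ i)).
Qed.

Lemma noetherian_lcomb I : noetherian R -> is_ideal I ->
  exists k g, forall a, I a <-> lcomb k g a.
Proof.
move=> hN /hN [k [g hg]].
exists k, (fun i => if insub i is Some j then g j else 0) => a; rewrite hg; split.
  case=> c ->; exists (fun i => if insub i is Some j then c j else 0).
  by apply: eq_bigr => i _; rewrite valK.
by case=> c ->; exists (fun j => c (val j)); apply: eq_bigr => i _; rewrite valK.
Qed.

Lemma prime_ideal P : is_prime P -> is_ideal P.
Proof. by case. Qed.

Lemma prime_notin1 P : is_prime P -> ~ P 1.
Proof. by case=> _ []. Qed.

Lemma prime_notinM P a b : is_prime P -> ~ P a -> ~ P b -> ~ P (a * b).
Proof. by move=> [_ [_ hP]] ha hb /hP []. Qed.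

Lemma prime_notinB P a b : is_prime P -> ~ P a -> P b -> ~ P (a - b).
Proof. by move=> hP ha hb hab; apply/ha/(idealBr (prime_ideal hP) hb). Qed.

Lemma prime_exp P a n : is_prime P -> P (a ^+ n) -> P a.
Proof.
move=> hP; elim: n => [|n IH]; first by rewrite expr0 => /(prime_notin1 hP).
by rewrite exprS => /(proj2 (proj2 hP)) [] // /IH.
Qed.

Lemma nilrad_sub P a : is_prime P -> @nilrad R a -> P a.
Proof.
move=> hP [n hn]; apply: (prime_exp (n := n) hP).
by rewrite hn; apply: ideal0; apply: prime_ideal.
Qed.

Lemma is_ideal_sat P J : is_prime P -> is_ideal J -> is_ideal (sat P J).
Proof.
move=> hP hJ; split; first by exists 1; rewrite mulr0; split; [apply: prime_notin1 | apply: ideal0].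
split.
  move=> a b [s [hs ha]] [t [ht hb]]; exists (s * t); split; first exact: prime_notinM.
  rewrite mulrDr; apply: idealD => //; first by rewrite (mulrC s) -mulrA; apply: idealM.
  by rewrite -mulrA; apply: idealM.
by move=> c a [s [hs ha]]; exists s; split => //; rewrite mulrCA; apply: idealM.
Qed.

Lemma sat_incl P J a : is_prime P -> J a -> sat P J a.
Proof. by move=> hP ha; exists 1; rewrite mul1r; split => //; apply: prime_notin1. Qed.

Lemma sat_idem P J a : is_prime P -> sat P (sat P J) a -> sat P J a.
Proof.
move=> hP [s [hs [t [ht h]]]]; exists (t * s); split; first exact: prime_notinM.
by rewrite -mulrA.
Qed.

Lemma local_unit m a : local_with m -> ~ m a -> exists b, a * b = 1.
Proof. by move=> [_ hm] na; apply: NNPP => nu; apply/na/hm. Qed.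

Lemma local_prime m : local_with m -> is_prime m.
Proof.
move=> hloc; have [hmi hm] := hloc; split => //; split.
  by move/hm; apply; exists 1; rewrite mulr1.
move=> a b hab; apply: NNPP => /not_or_and [na nb].
have [a' ha'] := local_unit hloc na; have [b' hb'] := local_unit hloc nb.
by move/hm: hab; apply; exists (a' * b'); rewrite mulrACA ha' hb' mulr1.
Qed.

Lemma local_prime_sub m P a : local_with m -> is_prime P -> P a -> m a.
Proof.
move=> hloc hP ha; apply: NNPP => /(local_unit hloc) [b hb].
by apply: (prime_notin1 hP); rewrite -hb; apply: idealMl => //; apply: prime_ideal.
Qed.

End Ideals.

Section Nakayama.
Variable R : comNzRingType.
Implicit Types (I J K P Q : R -> Prop) (a b c s u v : R).

(* Gaussian elimination over R_P: the relation for [g k] has the coefficient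
   [s0 - c0 k] outside P, so it eliminates [g k] from the other relations. *)
Lemma nakayama_lcomb P K k (g : nat -> R) : is_prime P -> is_ideal K ->
  (forall j, (j < k)%N -> exists s, ~ P s /\ exists c : nat -> R,
     (forall l, P (c l)) /\ K (s * g j - \sum_(l < k) c l * g l)) ->
  exists s, ~ P s /\ forall j, (j < k)%N -> K (s * g j).
Proof.
move=> hP hK; have hPi := prime_ideal hP.
elim: k => [|k IH] H; first by exists 1; split=> //; apply: prime_notin1.
have [s0 [hs0 [c0 [hc0 hK0]]]] := H k (ltnSn k).
set u := s0 - c0 k.
have hu : ~ P u by apply: prime_notinB.
have hKk : K (u * g k - \sum_(l < k) c0 l * g l).
  by move: hK0; rewrite big_ord_recr /= /u; congr K; ring.
have [s1 [hs1 H1]] : exists s, ~ P s /\ forall j, (j < k)%N -> K (s * g j).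
  apply: IH => j hj.
  have [sj [hsj [cj [hcj hKj]]]] := H j (ltnW hj).
  exists (u * sj); split; first exact: prime_notinM.
  exists (fun l => u * cj l + cj k * c0 l); split.
    by move=> l; apply: idealD => //; apply: idealM.
  have -> : \sum_(l < k) (u * cj l + cj k * c0 l) * g l
      = u * \sum_(l < k) cj l * g l + cj k * \sum_(l < k) c0 l * g l.
    by rewrite !mulr_sumr -big_split /=; apply: eq_bigr => l _; ring.
  have -> : u * sj * g j - (u * \sum_(l < k) cj l * g l + cj k * \sum_(l < k) c0 l * g l)
      = u * (sj * g j - \sum_(l < k.+1) cj l * g l)
        + cj k * (u * g k - \sum_(l < k) c0 l * g l).
    by rewrite big_ord_recr /=; ring.
  by apply: idealD => //; apply: idealM.
exists (s1 * u); split; first exact: prime_notinM.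
move=> j; rewrite ltnS leq_eqVlt => /orP [/eqP ->|hj]; last first.
  by rewrite mulrAC; apply: idealMl => //; apply: H1.
have -> : s1 * u * g k = s1 * (u * g k - \sum_(l < k) c0 l * g l)
    + \sum_(l < k) c0 l * (s1 * g l).
  have -> : \sum_(l < k) c0 l * (s1 * g l) = s1 * \sum_(l < k) c0 l * g l.
    by rewrite mulr_sumr; apply: eq_bigr => l _; rewrite mulrCA.
  by rewrite -mulrDr subrK mulrA.
apply: idealD; [by [] | by apply: idealM | apply: ideal_sum => // i _].
by apply: idealM => //; apply: H1.
Qed.

Lemma nakayama_sat P K J : noetherian R -> is_prime P -> is_ideal K -> is_ideal J ->
  (forall a, J a -> sat P (ideal_add K (ideal_mul P J)) a) ->
  exists s, ~ P s /\ forall a, J a -> K (s * a).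
Proof.
move=> hN hP hK hJ hsat; have [k [g hg]] := noetherian_lcomb hN hJ.
have [s [hs hsg]] : exists s, ~ P s /\ forall j, (j < k)%N -> K (s * g j).
  apply: nakayama_lcomb => // j hj.
  have [s [hs [u [v [hu [hv E]]]]]] := hsat _ (proj2 (hg _) (lcomb_gen g hj)).
  have [c [hc ev]] := ideal_mul_lcomb (prime_ideal hP) (fun a => proj1 (hg a)) hv.
  by exists s; split => //; exists c; split => //; rewrite E -ev addrK.
exists s; split => // a /hg [c ->]; rewrite mulr_sumr.
by apply: ideal_sum => // i _; rewrite mulrCA; apply: idealM => //; apply: hsg.
Qed.

End Nakayama.

Section MinimalPrimes.
Variable R : comNzRingType.
Implicit Types (I J K P Q : R -> Prop) (a b c s u v : R).

Definition minimal_over I P := forall Q, is_prime Q ->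
  (forall a, I a -> Q a) -> (forall a, Q a -> P a) -> forall a, P a -> Q a.

Lemma ascending_sub (B : nat -> R -> Prop) i j a : (forall n b, B n b -> B n.+1 b) ->
  (i <= j)%N -> B i a -> B j a.
Proof.
move=> hB /subnKC <-; elim: (j - i)%N => [|d IH]; first by rewrite addn0.
by rewrite addnS => /IH /hB.
Qed.

Lemma noetherian_acc (J : nat -> R -> Prop) : noetherian R ->
  (forall n, is_ideal (J n)) -> (forall n a, J n a -> J n.+1 a) ->
  exists n0, forall a, J n0.+1 a -> J n0 a.
Proof.
move=> hN hJ hJS; pose U a := exists n, J n a.
have hU : is_ideal U.
  split; first by exists 0%N; apply: ideal0.
  split; last by move=> c a [i ha]; exists i; apply: idealM.
  move=> a b [i ha] [j hb]; exists (maxn i j); apply: idealD => //.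
    by apply: (ascending_sub hJS (leq_maxl i j)).
  by apply: (ascending_sub hJS (leq_maxr i j)).
have [k [g hg]] := noetherian_lcomb hN hU.
have [n0 hn0] : exists n0, forall l, (l < k)%N -> J n0 (g l).
  have hgU l : (l < k)%N -> U (g l) by move=> hl; apply/hg/lcomb_gen.
  elim: k {hg} hgU => [|k IH] hgU; first by exists 0%N.
  have [n1 h1] := IH (fun l hl => hgU l (ltnW hl)).
  have [n2 h2] := hgU k (ltnSn k).
  exists (maxn n1 n2) => l; rewrite ltnS leq_eqVlt => /orP [/eqP ->|hl].
    by apply: (ascending_sub hJS (leq_maxr n1 n2)).
  by apply: (ascending_sub hJS (leq_maxl n1 n2)); apply: h1.
by exists n0 => a ha; apply: (lcomb_sub (hJ n0) hn0); apply/hg; exists n0.+1.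
Qed.

Lemma noetherian_maximal (F : (R -> Prop) -> Prop) : noetherian R ->
  (forall J, F J -> is_ideal J) -> (exists J, F J) ->
  exists J, F J /\ forall J', F J' -> (forall a, J a -> J' a) -> forall a, J' a -> J a.
Proof.
move=> hN hF [J0 hJ0]; apply: NNPP => nomax.
have grow (J : {J | F J}) : {J' : {J | F J} |
    (forall a, sval J a -> sval J' a) /\ exists a, sval J' a /\ ~ sval J a}.
  apply: constructive_indefinite_description; apply: NNPP => nogrow.
  apply: nomax; exists (sval J); split=> [|J' FJ' sub a ha]; first exact: svalP.
  apply: NNPP => na; apply: nogrow; exists (exist _ J' FJ'); split => //; by exists a.
pose Jn n := sval (iter n (fun J : {J | F J} => sval (grow J)) (exist _ J0 hJ0)).
have [n0 hn0] : exists n0, forall a, Jn n0.+1 a -> Jn n0 a.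
  apply: noetherian_acc => // [n|n a]; first exact/hF/svalP.
  by rewrite /Jn /=; move: (iter _ _ _) => J; case: (svalP (grow J)) => h _; apply: h.
have [a [ha na]] : exists a, Jn n0.+1 a /\ ~ Jn n0 a.
  by rewrite /Jn /=; move: (iter _ _ _) => J; case: (svalP (grow J)).
by apply/na/hn0.
Qed.

(* An ideal maximal among those containing I and avoiding the multiplicative
   set {s a^e | s ∉ P} is prime. *)
Lemma prime_avoiding_powers I P a : noetherian R -> is_ideal I -> is_prime P ->
  (forall s e, ~ P s -> ~ I (s * a ^+ e)) ->
  exists Q, is_prime Q /\ (forall b, I b -> Q b) /\ (forall b, Q b -> P b) /\ ~ Q a.
Proof.
move=> hN hI hP hav.
pose F J := [/\ is_ideal J, forall b, I b -> J b & forall s e, ~ P s -> ~ J (s * a ^+ e)].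
have [Q [[hQ hIQ hQav] hmax]] := @noetherian_maximal F hN (fun J => fun '(And3 h _ _) => h)
  (ex_intro _ I (And3 hI (fun b hb => hb) hav)).
have enlarge b : ~ Q b -> exists s e, ~ P s /\ ideal_add Q (principal b) (s * a ^+ e).
  move=> nb; apply: NNPP => Hn; apply: nb.
  have hQb : is_ideal (ideal_add Q (principal b)) by apply/is_ideal_add/is_ideal_principal.
  apply: (hmax (ideal_add Q (principal b))).
  - split => // [c /hIQ|s e hs hJ]; first exact: ideal_addl (is_ideal_principal b).
    by apply: Hn; exists s, e.
  - by move=> c; apply: ideal_addl; apply: is_ideal_principal.
  - by apply: ideal_addr => //; exists 1; rewrite mul1r.
have hQa : ~ Q a by move=> h; apply: (hQav 1 1%N (prime_notin1 hP)); rewrite mul1r expr1.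
have hQP b : Q b -> P b.
  by move=> hb; apply: NNPP => nb; apply: (hQav b 0%N nb); rewrite expr0 mulr1.
exists Q; split => //; split => //; split; first by move=> /hQP /(prime_notin1 hP).
move=> b c hbc; apply: NNPP => /not_or_and [nb nc].
have [s1 [e1 [hs1 [q1 [_ [hq1 [[r1 ->] E1]]]]]]] := enlarge b nb.
have [s2 [e2 [hs2 [q2 [_ [hq2 [[r2 ->] E2]]]]]]] := enlarge c nc.
apply: (hQav (s1 * s2) (e1 + e2)%N); first exact: prime_notinM.
have -> : s1 * s2 * a ^+ (e1 + e2) = (s1 * a ^+ e1) * (s2 * a ^+ e2) by rewrite exprD; ring.
rewrite E1 E2.
have -> : (q1 + r1 * b) * (q2 + r2 * c) = q1 * (q2 + r2 * c) + r1 * b * q2 + r1 * r2 * (b * c).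
  by ring.
by apply: idealD => //; [apply: idealD => //; [apply: idealMl | apply: idealM] | apply: idealM].
Qed.

Lemma minimal_over_rad I P a : noetherian R -> is_ideal I -> is_prime P ->
  minimal_over I P -> P a -> exists s e, ~ P s /\ I (s * a ^+ e).
Proof.
move=> hN hI hP hmin ha; apply: NNPP => Hn.
have [|Q [hQ [hIQ [hQP nQa]]]] := prime_avoiding_powers hN hI hP (a := a).
  by move=> s e hs hse; apply: Hn; exists s, e.
exact/nQa/(hmin Q).
Qed.

(* Induction on k, with J' = J + (gam).  Expanding z' ∈ J'^n one factor at a
   time, each factor raises either the power of J or the exponent of gam. *)
Lemma lcomb_pow_sat I P k (g : nat -> R) : is_ideal I -> is_prime P ->
  (forall l, (l < k)%N -> exists s e, ~ P s /\ I (s * g l ^+ e)) ->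
  exists s n, ~ P s /\ forall z, ideal_pow (lcomb k g) n z -> I (s * z).
Proof.
move=> hI hP; elim: k => [|k IH] H.
  exists 1, 1%N; split=> [|z /= /ideal_mul_subl]; first exact: prime_notin1.
  by case/(_ (is_ideal_lcomb 0 g)) => c ->; rewrite big_ord0 mulr0; apply: ideal0.
have [s [na [hs ha]]] := IH (fun l hl => H l (ltnW hl)).
have [s' [e [hs' he]]] := H k (ltnSn k).
set J := lcomb k g; set J' := lcomb k.+1 g; set gam := g k.
suff claim n na' e' : (na + e <= na' + e' + n)%N -> forall z z',
    ideal_pow J na' z -> ideal_pow J' n z' -> I (s * s' * z * gam ^+ e' * z').
  exists (s * s'), (na + e)%N; split=> [|z hz]; first exact: prime_notinM.
  by have := claim _ 0%N 0%N (leqnn _) 1 z Logic.I hz; rewrite mulr1 expr0 mulr1.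
elim: n na' e' => [|n IHn] na' e' hle z z' hz hz'.
  rewrite addn0 in hle; case: (leqP na na') => hna.
    have -> : s * s' * z * gam ^+ e' * z' = (s * z) * (s' * gam ^+ e' * z') by ring.
    by apply: idealMl => //; apply/ha/(ideal_pow_sub (is_ideal_lcomb k g) hna).
  have hee : (e <= e')%N by lia.
  have -> : s * s' * z * gam ^+ e' * z' = (s' * g k ^+ e) * (s * z * gam ^+ (e' - e) * z').
    by rewrite /gam -{1}(subnKC hee) exprD; ring.
  exact: idealMl.
case: hz' => sq [hsq ->]; rewrite mulr_sumr; apply: ideal_sum => // pr /hsq [/lcomb_recr].
move=> [w [c [hw ->]]] hv.
have -> : s * s' * z * gam ^+ e' * ((w + c * g k) * pr.2) =
    s * s' * (z * w) * gam ^+ e' * pr.2 + c * (s * s' * z * gam ^+ e'.+1 * pr.2).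
  by rewrite exprS /gam; ring.
apply: idealD => //; last by apply: idealM => //; apply: (IHn na' e'.+1) => //; lia.
by apply: (IHn na'.+1 e') => //; [lia | rewrite /= mulrC; apply: mem_ideal_mul].
Qed.

Lemma minimal_over_pow I P : noetherian R -> is_ideal I -> is_prime P ->
  minimal_over I P -> exists s n, ~ P s /\ forall z, ideal_pow P n z -> I (s * z).
Proof.
move=> hN hI hP hmin; have [k [g hg]] := noetherian_lcomb hN (prime_ideal hP).
have [s [n [hs H]]] : exists s n, ~ P s /\ forall z, ideal_pow (lcomb k g) n z -> I (s * z).
  by apply: lcomb_pow_sat => // l hl; apply: (minimal_over_rad hN hI hP hmin); apply/hg/lcomb_gen.
by exists s, n; split => // z hz; apply/H/(ideal_pow_mono _ hz) => b /hg.
Qed.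

End MinimalPrimes.

Section Artinian.
Variable R : comNzRingType.
Implicit Types (I J K P Q : R -> Prop) (a b c s u v : R).

(* The chain of localisations [(B n) R_P] is eventually constant. *)
Definition sat_stable P (B : nat -> R -> Prop) :=
  exists n0, forall n, (n0 <= n)%N -> forall a, B n0 a -> sat P (B n) a.

Lemma descending_sub (B : nat -> R -> Prop) i j a : (forall n b, B n.+1 b -> B n b) ->
  (i <= j)%N -> B j a -> B i a.
Proof.
move=> hB /subnKC <-; elim: (j - i)%N => [|d IH]; first by rewrite addn0.
by rewrite addnS => /hB /IH.
Qed.

Lemma is_ideal_meet I J : is_ideal I -> is_ideal J -> is_ideal (fun a => I a /\ J a).
Proof.
move=> hI hJ; split; first by split; apply: ideal0.
by split=> [a b [ha ha'] [hb hb']|c a [ha ha']]; split; apply: idealD || apply: idealM.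
Qed.

(* Between [P (h_0, ..., h_(k-1))] and [(h_0, ..., h_(k-1))], the ideals [B n]
   are subspaces of a k-dimensional space over the residue field at P;
   induct on k, splitting off the coordinate along [h k]. *)
Lemma sat_stable_between P k (h : nat -> R) (B : nat -> R -> Prop) : is_prime P ->
  (forall n, is_ideal (B n)) -> (forall n a, B n.+1 a -> B n a) ->
  (forall n a, B n a -> lcomb k h a) ->
  (forall n c l, (l < k)%N -> P c -> B n (c * h l)) ->
  sat_stable P B.
Proof.
move=> hP; elim: k B => [|k IH] B hB hBS hBh hPB.
  exists 0%N => n _ a /hBh [c ->]; rewrite big_ord0; apply: sat_incl => //; exact: ideal0.
pose B' n a := B n a /\ lcomb k h a.
have [n1 hn1] : sat_stable P B'.
  apply: IH => [n|n a [ha ha']|n a []|n c l hl hc]; first exact/is_ideal_meet/is_ideal_lcomb.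
  - by split=> //; apply: hBS.
  - by [].
  - split; first by apply: hPB => //; apply: ltnW.
    by apply: idealM; [apply: is_ideal_lcomb | apply: lcomb_gen].
case: (classic (exists n2, (n1 <= n2)%N /\ forall a, B n2 a ->
          exists w p, lcomb k h w /\ P p /\ a = w + p * h k)) => [[n2 [hn12 H2]]|H2].
  exists n2 => n hn a ha; have [w [p [hw [hp E]]]] := H2 a ha.
  have hw' : B' n1 w.
    split => //; apply: (descending_sub hBS hn12).
    have -> : w = a - p * h k by rewrite E addrK.
    by apply: idealB => //; apply: hPB.
  have [s [hs [hsw _]]] := hn1 n (leq_trans hn12 hn) w hw'.
  exists s; split => //; rewrite E mulrDr; apply: idealD => //; apply: idealM => //.
  exact: hPB.
exists n1 => n hn a ha.
have [b [hb hbn]] : exists b, B n b /\ ~ exists w p, lcomb k h w /\ P p /\ b = w + p * h k.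
  apply: NNPP => Hn; apply: H2; exists n; split => // b hb; apply: NNPP => Hn2.
  by apply: Hn; exists b.
have [w [c [hw E]]] := lcomb_recr (hBh _ _ hb).
have hc : ~ P c by move=> hc; apply: hbn; exists w, c.
have [w' [c' [hw' E']]] := lcomb_recr (hBh _ _ ha).
have hz : B' n1 (c * a - c' * b).
  split; first by apply: idealB => //; apply: idealM => //; apply: (descending_sub hBS hn).
  have -> : c * a - c' * b = c * w' - c' * w by rewrite E E'; ring.
  by have hk := is_ideal_lcomb k h; apply: idealB => //; apply: idealM.
have [s [hs [hsz _]]] := hn1 n hn _ hz.
exists (s * c); split; first exact: prime_notinM.
have -> : s * c * a = s * (c * a - c' * b) + (s * c') * b by ring.
by apply: idealD => //; apply: idealM.
Qed.

(* [R_P / P^k R_P] is artinian: filter it by the powers of P. *)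
Lemma sat_stable_of_pow P k (J : nat -> R -> Prop) : noetherian R -> is_prime P ->
  (forall n, is_ideal (J n)) -> (forall n a, J n.+1 a -> J n a) ->
  (forall n a, ideal_pow P k a -> J n a) ->
  sat_stable P J.
Proof.
move=> hN hP; have hPi := prime_ideal hP.
elim: k J => [|k IH] J hJ hJS hPJ.
  by exists 0%N => n _ a _; apply: sat_incl => //; apply: hPJ.
have hPk := is_ideal_pow k hPi.
pose A n := ideal_add (J n) (ideal_pow P k).
have [n0 hn0] : sat_stable P A.
  apply: IH => [n|n _ [u [v [hu [hv ->]]]]|n a ha]; first exact: is_ideal_add.
  - by exists u, v; split => //; apply: hJS.
  - exact: ideal_addr.
have [m [h hh]] := noetherian_lcomb hN hPk.
pose B n a := J (n0 + n)%N a /\ ideal_pow P k a.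
have [n1 hn1] : sat_stable P B.
  apply: (@sat_stable_between P m h) => // [n|n a []|n a [_ /hh] //|n c l hl hc].
  - exact: is_ideal_meet.
  - by rewrite addnS => /hJS.
  - split; last by apply: idealM => //; apply/hh; apply: lcomb_gen.
    by apply: hPJ => /=; apply: mem_ideal_mul => //; apply/hh; apply: lcomb_gen.
exists (n0 + n1)%N => n hn a ha.
have hA : A n0 a by apply: ideal_addl => //; apply: (descending_sub hJS _ ha); apply: leq_addr.
have [s [hs [j [q [hj [hq E]]]]]] := hn0 n (leq_trans (leq_addr _ _) hn) a hA.
have hBq : B n1 q.
  split => //; rewrite -(addKr j q) -E addrC.
  by apply: idealB => //; [apply: idealM | apply: (descending_sub hJS hn)].
have [s' [hs' [hsq _]]] := hn1 (n - n0)%N ltac:(lia) q hBq.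
rewrite subnKC in hsq; last by lia.
exists (s' * s); split; first exact: prime_notinM.
by rewrite -mulrA E mulrDr; apply: idealD => //; apply: idealM.
Qed.

End Artinian.

Section PrincipalIdeal.
Variable R : comNzRingType.
Variables (N Q P : R -> Prop) (y q : R).
Hypotheses (noethR : noetherian R) (primeN : is_prime N) (primeQ : is_prime Q)
  (primeP : is_prime P) (N_sub_Q : forall a, N a -> Q a) (Q_sub_P : forall a, Q a -> P a)
  (Qq : Q q) (Nq : ~ N q) (Py : P y) (Qy : ~ Q y).
Hypothesis minP : minimal_over (ideal_add N (principal y)) P.

(* The symbolic powers of Q/N in R/N, pulled back to R. *)
Definition symbolic n := sat Q (ideal_add (ideal_pow Q n) N).

Let N_ideal := prime_ideal primeN.
Let Q_ideal := prime_ideal primeQ.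

Lemma is_ideal_symbolic n : is_ideal (symbolic n).
Proof. by apply: is_ideal_sat => //; apply/is_ideal_add/N_ideal/is_ideal_pow. Qed.

Lemma symbolic_decr n a : symbolic n.+1 a -> symbolic n a.
Proof.
case=> s [hs [u [v [hu [hv E]]]]]; exists s; split => //; exists u, v; split => //.
exact: ideal_pow_sub hu.
Qed.

Lemma symbolic_divr n c : symbolic n (c * y) -> symbolic n c.
Proof.
case=> s [hs h]; exists (s * y); split; first exact: prime_notinM.
by rewrite mulrAC -mulrA.
Qed.

(* As P is minimal over N + (y), R_P/(N + (y)) is artinian. *)
Lemma symbolic_stable : exists n, forall a, symbolic n a ->
  sat P (ideal_add (symbolic n.+1) (ideal_mul P (symbolic n))) a.
Proof.
pose J n := sat P (ideal_add (symbolic n) (principal y)).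
have idealJ n : is_ideal (J n).
  by apply: is_ideal_sat => //; apply/is_ideal_add/is_ideal_principal/is_ideal_symbolic.
have [s0 [k [hs0 hk]]] := minimal_over_pow noethR
  (is_ideal_add N_ideal (is_ideal_principal y)) primeP minP.
have [n hn] : sat_stable P J.
  apply: (@sat_stable_of_pow _ _ k) => // [n a|n a /hk [u [v [hu [hv E]]]]].
    by case=> s [hs [u [v [hu [hv E]]]]]; exists s; split => //; exists u, v;
      split => //; apply: symbolic_decr.
  exists s0; split => //; exists u, v; split; last by [].
  by apply: sat_incl => //; apply: ideal_addr => //; apply: is_ideal_pow.
exists n => a ha.
have : J n a by apply: sat_incl => //; apply: ideal_addl => //; apply: is_ideal_principal.
move/(hn n.+1 (leqnSn n))/(sat_idem primeP) => [s [hs [b [_ [hb [[c ->] E]]]]]].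
exists s; split => //; exists b, (c * y); split => //; split => //.
rewrite mulrC; apply: mem_ideal_mul => //; apply: symbolic_divr.
rewrite -(addKr b (c * y)) -E addrC.
have idealSn := is_ideal_symbolic n.
by apply: idealB => //; [apply: idealM | apply: symbolic_decr].
Qed.

Lemma symbolic_nakayama : exists n s, ~ P s /\
  forall a, symbolic n a -> symbolic n.+1 (s * a).
Proof.
have [n hn] := symbolic_stable; exists n.
by apply: nakayama_sat => //; apply: is_ideal_symbolic.
Qed.

Lemma pow_nakayama : exists n s, ~ Q s /\ forall a, ideal_pow Q n a -> N (s * a).
Proof.
have [n [s1 [hs1 H1]]] := symbolic_nakayama; exists n.
apply: nakayama_sat => // [|a ha]; first exact: is_ideal_pow.
have [s [hs [u [v [hu [hv E]]]]]] : symbolic n.+1 (s1 * a).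
  by apply: H1; apply: sat_incl => //; apply: ideal_addl.
exists (s * s1); split; first by apply: prime_notinM => // /Q_sub_P.
by exists v, u; rewrite -mulrA E addrC.
Qed.

Lemma not_minimal_over : False.
Proof.
have [n [s [hs hN]]] := pow_nakayama.
case/(proj2 (proj2 primeN)): (hN _ (mem_ideal_pow n Qq)) => [/N_sub_Q //|].
by move/(prime_exp primeN).
Qed.

End PrincipalIdeal.

(* Krull's principal ideal theorem, in the form: if P has height at least 2
   over N, then P is not minimal over N + (y). *)
Lemma principal_ideal_theorem (R : comNzRingType) (N Q P : R -> Prop) y q :
  noetherian R -> is_prime N -> is_prime Q -> is_prime P ->
  (forall a, N a -> Q a) -> (forall a, Q a -> P a) -> Q q -> ~ N q -> P y -> ~ Q y ->
  exists Q', [/\ is_prime Q', forall a, N a -> Q' a, Q' y, forall a, Q' a -> P a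
    & ~ forall a, P a -> Q' a].
Proof.
move=> hN pN pQ pP NQ QP Qq Nq Py Qy; apply: NNPP => nQ'.
apply: (not_minimal_over hN pN pQ pP NQ QP Qq Nq Py Qy) => Q' pQ' hNQ' hQ'P.
apply: NNPP => sub; apply: nQ'; exists Q'; split => //.
- by move=> a ha; apply: hNQ'; apply: ideal_addl => //; apply: is_ideal_principal.
- by apply: hNQ'; apply: ideal_addr; [exact: prime_ideal | exists 1; rewrite mul1r].
Qed.

Section PrimeChains.
Variable R : comNzRingType.
Implicit Types (P m : R -> Prop) (C D : nat -> R -> Prop).

Lemma prime_chain_rcons C n P : prime_chain C n -> is_prime P ->
  (forall a, C n a -> P a) -> (exists a, P a /\ ~ C n a) ->
  prime_chain (fun i => if (i <= n)%N then C i else P) n.+1.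
Proof.
move=> [hp hi] hP hsub hstr; split=> [i hin|i hin]; first by case: ifP => // h; apply: hp.
case: (ltnP i n) => h; first by rewrite (ltnW h); apply: hi.
have -> : i = n by apply/eqP; rewrite eqn_leq h -ltnS hin.
by rewrite ?leqnn ?ltnn.
Qed.

Lemma prime_chain_belast C n : prime_chain C n.+1 -> prime_chain C n.
Proof. by move=> [hp hi]; split=> i hin; [apply: hp | apply: hi]; apply: leqW. Qed.

Lemma prime_chain_cat C D r t : prime_chain C r -> prime_chain D t ->
  (forall a, C r a -> D 0%N a) ->
  prime_chain (fun i => if (i < r)%N then C i else D (i - r)%N) (r + t).
Proof.
move=> [hCp hCi] [hDp hDi] hCD; split=> [i hi|i hi].
  by case: ifP => h; [apply/hCp/ltnW | apply: hDp; lia].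
case: (ltnP i.+1 r) => h1; first by rewrite (ltnW h1); apply/hCi/ltnW.
case: (ltnP i r) => h2; last first.
  have -> : (i.+1 - r = (i - r).+1)%N by lia.
  by apply: hDi; lia.
have ei : i.+1 = r by lia.
have -> : (i.+1 - r = 0)%N by lia.
have [sub [a [ha na]]] := hCi i h2.
by split=> [b hb|]; [|exists a; split => //]; apply: hCD; rewrite -ei //; apply: sub.
Qed.

Lemma prime_chain_lower n C y : noetherian R -> prime_chain C n.+1 -> C n.+1 y ->
  exists D, [/\ prime_chain D n, forall a, D n a <-> C n.+1 a, D 0%N y
    & forall a, C 0%N a -> D 0%N a].
Proof.
move=> hN; elim: n C y => [|n IH] C y hC hy; have [hp hi] := hC.
  exists (fun=> C 1%N); split => //; first by split=> // i _; apply: hp.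
  by apply: (proj1 (hi 0%N isT)).
pose top D := fun i => if (i <= n)%N then D i else C n.+2.
have [sub [a [ha na]]] := hi n.+1 (ltnSn _).
have lift_top D : prime_chain D n -> (forall a, D n a <-> C n.+1 a) ->
    prime_chain (top D) n.+1.
  move=> hD hDn; apply: prime_chain_rcons => //; first exact: hp.
    by move=> b /hDn /sub.
  by exists a; split => // /hDn.
case: (classic (C n.+1 y)) => hyn.
  have [D [hD hDn hD0 hC0]] := IH C y (prime_chain_belast hC) hyn.
  by exists (top D); rewrite /top ltnn leq0n; split => //; apply: lift_top.
(* Otherwise replace C n.+1 by a prime Q' ∋ y strictly between C n and C n.+2. *)
have [b [hb nb]] := proj2 (hi n (leqW (ltnSn n))).
have [Q' [pQ' hNQ' hyQ' hQ'P nPQ']] := principal_ideal_theorem hN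
  (hp n (leqW (leqW (leqnn n)))) (hp n.+1 (leqW (leqnn _))) (hp n.+2 (leqnn _))
  (proj1 (hi n (leqW (ltnSn n)))) sub hb nb hy hyn.
pose E i := if (i <= n)%N then C i else Q'.
have hE : prime_chain E n.+1.
  apply: prime_chain_rcons => //; first exact/prime_chain_belast/prime_chain_belast.
  by exists y; split => // /(proj1 (hi n (leqW (ltnSn n)))).
have [D [hD hDn hD0 hC0]] := IH E y hE ltac:(by rewrite /E ltnn).
exists (top D); rewrite /top ltnn leq0n; split => //.
apply: prime_chain_rcons => //; first exact: hp.
  by move=> c /hDn; rewrite /E ltnn; apply: hQ'P.
have [c [hc nc]] : exists c, C n.+2 c /\ ~ Q' c.
  by apply: NNPP => H; apply: nPQ' => c hc; apply: NNPP => nc; apply: H; exists c.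
by exists c; split => // /hDn; rewrite /E ltnn.
Qed.

Lemma prime_chain_lower_all k (y : 'I_k -> R) n C : noetherian R ->
  prime_chain C n -> (forall i, C n (y i)) ->
  exists n' D, [/\ prime_chain D n', (n <= n' + k)%N, forall i, D 0%N (y i)
    & forall a, C n a -> D n' a].
Proof.
move=> hN hC; elim: k y => [|k IH] y hy.
  by exists n, C; split => //; [rewrite addn0 | case].
have [n' [D [hD hle hD0 htop]]] := IH (fun i => y (lift ord_max i)) (fun i => hy _).
have hyk : D n' (y ord_max) by apply/htop/hy.
case: n' hD hle hD0 htop hyk => [|n'] hD hle hD0 htop hyk.
  exists 0%N, D; split => // [|i]; first by rewrite addnS leqW.
  by case: (unliftP ord_max i) => [j ->|->].
have [D' [hD' hD'top hD'y hD'0]] := prime_chain_lower hN hD hyk.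
exists n', D'; split => // [|i|a /htop /hD'top //]; first by rewrite addnS -addSn.
by case: (unliftP ord_max i) => [j ->|->] //; apply/hD'0/hD0.
Qed.

Lemma prime_chain_extend_local m n C : local_with m -> prime_chain C n ->
  exists n' D, [/\ prime_chain D n', (n <= n')%N & forall a, m a -> D n' a].
Proof.
move=> hloc hC; case: (classic (forall a, m a -> C n a)) => hm; first by exists n, C.
exists n.+1, (fun i => if (i <= n)%N then C i else m); rewrite ltnn; split => //.
apply: prime_chain_rcons => //; first exact: local_prime.
  by move=> a; apply: local_prime_sub hloc (proj1 hC n (leqnn n)).
by apply: NNPP => nm; apply: hm => a ha; apply: NNPP => na; apply: nm; exists a.
Qed.

End PrimeChains.

Section RegularReduced.
Variables (R : comNzRingType) (m p : R -> Prop) (r t : nat).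
Variables (y : 'I_r -> R) (x : 'I_t -> R).
Hypotheses (noethR : noetherian R) (local_m : local_with m).
Hypotheses (prime_nil : is_prime (@nilrad R)) (prime_p : is_prime p).
Hypothesis y_p : forall i, p (y i).

Let ideal_nil := prime_ideal prime_nil.

Lemma prime_sub_gen_nil :
  (forall a, p a -> exists c : 'I_r -> R,
     ideal_add (ideal_sq p) (@nilrad R) (a - \sum_(i < r) c i * y i)) ->
  forall a, p a -> ideal_add (gen_by y) (@nilrad R) a.
Proof.
move=> span; have idealK := is_ideal_add (is_ideal_gen_by y) ideal_nil.
have [|s [hs hsK]] := nakayama_sat noethR (local_prime local_m) idealK (prime_ideal prime_p).
  move=> a /span [c [u [nu [hu [hnu E]]]]]; apply: sat_incl; first exact: local_prime.
  have hK : ideal_add (gen_by y) (@nilrad R) (\sum_(i < r) c i * y i + nu).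
    by exists (\sum_(i < r) c i * y i), nu; do !split => //; exists c.
  exists (\sum_(i < r) c i * y i + nu), u; split => //; split.
    by apply: ideal_mul_mono (ideal_sq_mul hu) => // b; apply: local_prime_sub.
  by rewrite -(subrK (\sum_(i < r) c i * y i) a) E; ring.
move=> a /hsK; have [b hb] := local_unit local_m hs.
by move/(idealM b idealK); rewrite mulrA (mulrC b) hb mul1r.
Qed.

Lemma max_ideal_gen_nil :
  (forall i, m (x i)) -> (forall a, m a <-> ideal_add p (gen_by x) a) ->
  (forall a, p a -> ideal_add (gen_by y) (@nilrad R) a) ->
  forall a, m a <-> ideal_add (gen_by (fam_cat y x)) (@nilrad R) a.
Proof.
move=> x_m m_eq p_sub a; have prime_m := local_prime local_m.
split=> [/m_eq [u [v [/p_sub [w [nu [hw [hnu ->]]] [hv ->]]]]]|[w [nu [hw [hnu ->]]]]].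
  by exists (w + v), nu; split; [apply: gen_by_cat | split => //; rewrite addrAC].
apply: idealD; [exact: prime_ideal | | exact: nilrad_sub].
apply: (gen_by_sub (prime_ideal prime_m)) hw => i; rewrite /fam_cat.
by case: (split i) => j; [apply: local_prime_sub (y_p j) | apply: x_m].
Qed.

Lemma krull_dim_le :
  (forall a, p a -> ideal_add (gen_by y) (@nilrad R) a) ->
  (forall (D : nat -> R -> Prop) n, prime_chain D n -> (forall a, p a -> D 0%N a) ->
    (n <= t)%N) ->
  forall (C : nat -> R -> Prop) n, prime_chain C n -> (n <= r + t)%N.
Proof.
move=> p_sub dim_le C n hC.
have [n1 [D [hD hn1 hmD]]] := prime_chain_extend_local local_m hC.
have [n2 [E [hE hle hyE _]]] := prime_chain_lower_all noethR hD
  (fun i => hmD _ (local_prime_sub local_m prime_p (y_p i))).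
have hE0 : is_prime (E 0%N) := proj1 hE 0%N (leq0n _).
suff : (n2 <= t)%N by lia.
apply: dim_le hE _ => a /p_sub [w [nu [hw [hnu ->]]]].
by apply: idealD; [exact: prime_ideal | exact: gen_by_sub (prime_ideal hE0) hyE hw
  | exact: nilrad_sub].
Qed.

End RegularReduced.

Unset Implicit Arguments.

Theorem mainTheorem13 (R : comNzRingType) (m p : R -> Prop) (r t : nat)
  (y : 'I_r -> R) (x : 'I_t -> R) :
  noetherian R -> local_with m ->
  (forall P, associated P <-> (forall a, P a <-> @nilrad R a)) ->
  is_prime p ->
  rsop_loc_red p y -> rsop_quot m p x ->
  (forall i, ~ p (x i)) ->
  free_conormal_basis p y ->
  red_regular m.
Proof.
(* Not needed: the independence half of the conormal basis, [x_i ∉ p], and,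
   from [rsop_loc_red], that y generates p R_p modulo nilpotents and ht p <= r. *)
move=> noethR local_m ass_nil prime_p [y_p [_ [[C [hC hCp]] _]]]
  [x_m [m_eq [[D [hD hpD]] dim_le]]] _ [span _].
have [prime_nil _] := proj2 (ass_nil (@nilrad R)) (fun a => iff_refl _).
have p_sub := prime_sub_gen_nil noethR local_m prime_nil prime_p span.
exists (r + t)%N, (fam_cat y x); split.
  split; last exact: (krull_dim_le noethR local_m prime_p y_p p_sub dim_le).
  by eexists; apply: prime_chain_cat hC hD _ => a /hCp /hpD.
exact: max_ideal_gen_nil local_m prime_p y_p x_m m_eq p_sub.
Qed.
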